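(* Let $T$ be a continuous Archimedean $t$-norm, let $A$ be a fuzzy number in $\mathbb R$ with modal value $m=\mathbb M A$, and let $(X_n)_{n\ge1}$ be a sequence of $T$-independent fuzzy variables on a possibility space $(\Omega,\Pi)$, each with membership function $A$. Let $\bar A_n=\frac1n(X_1+\dots+X_n)$ and, for odd $n$, $M_n=\mathrm{median}(X_1,\dots,X_n)$ (defined pointwise on $\Omega$). Then $(\bar A_n)_{n\ge1}$ and $(M_{2n+1})_{n\ge0}$ converge to the constant $m$ in distribution, in measure, and almost surely.
   Context: A possibility space $(\Omega,\Pi)$: $\Pi(S)=\sup_{\omega\in S}\pi(\omega)$ ($\sup\emptyset=0$) for a map $\pi:\Omega\to[0,1]$ attaining $1$. A fuzzy variable is a map $X:\Omega\to\mathbb R$; its membership function is $A_X(y)=\Pi(X^{-1}(y))$. A $t$-norm is a commutative, associative map $T:[0,1]^2\to[0,1]$, non-decreasing in each variable, with neutral element $1$; continuous and Archimedean means continuous and for all $x,y\in(0,1)$ some $n$ gives $T(x,\dots,x)<y$ ($n$ arguments). Fuzzy variables $X_1,X_2,\dots$ are $T$-independent if for all distinct indices $i_1,\dots,i_k$ and all $B_1,\dots,B_k\subseteq\mathbb R$, $\Pi(X_{i_1}\in B_1,\dots,X_{i_k}\in B_k)=T(\Pi(X_{i_1}\in B_1),\dots,\Pi(X_{i_k}\in B_k))$. A fuzzy number is a map $A:\mathbb R\to[0,1]$ whose $\alpha$-cuts $\{A\ge\alpha\}$, $\alpha\in(0,1]$, are nonempty compact intervals and with exactly one point $m$ with $A(m)=1$;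 $\mathbb M A=m$. Convergence to a constant $c$: in distribution means $A_{Y_n}^\alpha\to\{c\}$ in the Hausdorff metric for every $\alpha\in(0,1]$; in measure means $\Pi(|Y_n-c|\ge\epsilon)\to0$ for all $\epsilon>0$; almost surely means $\Pi(\{\omega: Y_n(\omega)\not\to c\})=0$. *)

From Stdlib Require Import Reals Lra List.
Import ListNotations.
Open Scope R_scope.

Record PossSpace := {
  Omega : Type;
  pi : Omega -> R;
  pi_range : forall w, 0 <= pi w <= 1;
  pi_attains_one : exists w, pi w = 1
}.

(* values whose sup is Pi(S); 0 is included so that sup(empty) = 0
   (harmless otherwise since pi >= 0) *)
Definition poss_vals (P : PossSpace) (S : Omega P -> Prop) : R -> Prop :=
  fun y => y = 0 \/ exists w, S w /\ y = pi P w.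

Lemma poss_vals_bound P S : bound (poss_vals P S).
Proof.
  exists 1. intros y [->|[w [_ ->]]]; [lra|]. apply (pi_range P w).
Qed.

Lemma poss_vals_ne P S : exists y, poss_vals P S y.
Proof. exists 0. left. reflexivity. Qed.

Definition Poss (P : PossSpace) (S : Omega P -> Prop) : R :=
  proj1_sig (completeness (poss_vals P S) (poss_vals_bound P S) (poss_vals_ne P S)).

Definition membership (P : PossSpace) (X : Omega P -> R) (y : R) : R :=
  Poss P (fun w => X w = y).

Definition in01 (x : R) : Prop := 0 <= x <= 1.

Definition is_tnorm (T : R -> R -> R) : Prop :=
  (forall x y, in01 x -> in01 y -> in01 (T x y)) /\
  (forall x y, in01 x -> in01 y -> T x y = T y x) /\
  (forall x y z, in01 x -> in01 y -> in01 z -> T x (T y z) = T (T x y) z) /\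
  (forall x x' y, in01 x -> in01 x' -> in01 y -> x <= x' -> T x y <= T x' y) /\
  (forall x, in01 x -> T x 1 = x).

Definition tnorm_continuous (T : R -> R -> R) : Prop :=
  forall x y, in01 x -> in01 y -> forall eps, 0 < eps ->
    exists delta, 0 < delta /\
      forall x' y', in01 x' -> in01 y' -> Rabs (x' - x) < delta ->
        Rabs (y' - y) < delta -> Rabs (T x' y' - T x y) < eps.

Fixpoint Tpow (T : R -> R -> R) (n : nat) (x : R) : R :=
  match n with
  | O => 1
  | S k => T x (Tpow T k x)
  end.

Definition tnorm_archimedean (T : R -> R -> R) : Prop :=
  forall x y, 0 < x < 1 -> 0 < y < 1 -> exists n, Tpow T n x < y.

Definition cont_arch_tnorm (T : R -> R -> R) : Prop :=
  is_tnorm T /\ tnorm_continuous T /\ tnorm_archimedean T.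

(* A finite family of pairs (index i_j, set B_j) with distinct indices:
   Pi(X_{i_1} in B_1, ..., X_{i_k} in B_k) = T(Pi(X_{i_1} in B_1), ..., Pi(X_{i_k} in B_k)). *)
Definition T_independent (P : PossSpace) (T : R -> R -> R)
    (X : nat -> Omega P -> R) : Prop :=
  forall l : list (nat * (R -> Prop)), NoDup (map fst l) ->
    Poss P (fun w => Forall (fun p => snd p (X (fst p) w)) l) =
    fold_right (fun p acc => T (Poss P (fun w => snd p (X (fst p) w))) acc) 1 l.

Definition fuzzy_number (A : R -> R) : Prop :=
  (forall y, in01 (A y)) /\
  (forall alpha, 0 < alpha <= 1 ->
     exists a b, a <= b /\ forall y, (alpha <= A y <-> a <= y <= b)) /\
  (exists! m, A m = 1).

Fixpoint insertR (x : R) (l : list R) : list R :=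
  match l with
  | [] => [x]
  | y :: l' => if Rle_dec x y then x :: y :: l' else y :: insertR x l'
  end.

Fixpoint sortR (l : list R) : list R :=
  match l with
  | [] => []
  | x :: l' => insertR x (sortR l')
  end.

(* median of a list (for odd length 2k+1: the (k+1)-th smallest element) *)
Definition median (l : list R) : R := nth (Nat.div2 (length l)) (sortR l) 0.

(* sample values X_1(w), ..., X_n(w); X is 0-indexed: X_i = X (i-1) *)
Definition sample (P : PossSpace) (X : nat -> Omega P -> R) (n : nat) (w : Omega P)
  : list R := map (fun i => X i w) (seq 0 n).

(* \bar A_{k+1} = (X_1 + ... + X_{k+1}) / (k+1) *)
Definition sample_mean (P : PossSpace) (X : nat -> Omega P -> R) (k : nat)
  (w : Omega P) : R :=
  fold_right Rplus 0 (sample P X (S k) w) / INR (S k).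

(* M_{2k+1} = median(X_1, ..., X_{2k+1}) *)
Definition sample_median (P : PossSpace) (X : nat -> Omega P -> R) (k : nat)
  (w : Omega P) : R :=
  median (sample P X (S (2 * k)) w).

(* alpha-cuts of A_{Y_n} converge to {c} in the Hausdorff metric:
   eventually nonempty and sup_{s in cut} |s - c| -> 0 *)
Definition conv_distribution (P : PossSpace) (Y : nat -> Omega P -> R) (c : R) : Prop :=
  forall alpha, 0 < alpha <= 1 ->
    forall eps, 0 < eps -> exists N, forall n, (N <= n)%nat ->
      (exists s, alpha <= membership P (Y n) s) /\
      (forall s, alpha <= membership P (Y n) s -> Rabs (s - c) <= eps).

Definition conv_measure (P : PossSpace) (Y : nat -> Omega P -> R) (c : R) : Prop :=
  forall eps, 0 < eps ->
    Un_cv (fun n => Poss P (fun w => Rabs (Y n w - c) >= eps)) 0.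

Definition conv_as (P : PossSpace) (Y : nat -> Omega P -> R) (c : R) : Prop :=
  Poss P (fun w => ~ Un_cv (fun n => Y n w) c) = 0.

From Stdlib Require Import Reals Lra Lia List Permutation Sorting.
Import ListNotations.
Open Scope R_scope.

(** All three convergence modes follow from one uniform statement: on every
    level set [{w | delta <= pi w}] (with [0 < delta < 1]) the statistic
    converges to [m] uniformly in [w] ([conv_uniform_levels]).  To prove it,
    fix [w] with [delta <= pi w].  T-independence applied to the singletons
    [{X_i w}] gives [pi w <= T(A(X_1 w), ..., A(X_n w))].  Hence every sample
    value lies in the [delta]-cut of [A], a bounded interval around [m]; and
    since [A] is quasi-concave with a unique mode, values [eps]-far from [m]
    have degree at most some [al < 1], so by the Archimedean property fewer
    than a fixed [K] of them (independent of [n]) can occur.  Bounded values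
    with at most [K] exceptions force the mean to [m]; a median of [2n+1]
    values with fewer than [n] exceptions is close to [m]. *)

Lemma Poss_ge (P : PossSpace) (Q : Omega P -> Prop) (w : Omega P) :
  Q w -> pi P w <= Poss P Q.
Proof.
  intro Hw. unfold Poss.
  destruct (completeness _ _ _) as [s Hs]; simpl.
  apply (proj1 Hs). right. exists w. auto.
Qed.

Lemma Poss_nonneg (P : PossSpace) (Q : Omega P -> Prop) : 0 <= Poss P Q.
Proof.
  unfold Poss. destruct (completeness _ _ _) as [s Hs]; simpl.
  apply (proj1 Hs). left. reflexivity.
Qed.

Lemma Poss_le (P : PossSpace) (Q : Omega P -> Prop) (c : R) :
  0 <= c -> (forall w, Q w -> pi P w <= c) -> Poss P Q <= c.
Proof.
  intros Hc Hb. unfold Poss. destruct (completeness _ _ _) as [s Hs]; simpl.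
  apply (proj2 Hs). intros y [->|[w [Hw ->]]]; auto.
Qed.

Section Tnorm.
Variable T : R -> R -> R.
Hypothesis HT : is_tnorm T.

Lemma T_in01 x y : in01 x -> in01 y -> in01 (T x y).
Proof. destruct HT as [H01 _]. auto. Qed.

Lemma T_mono_r x y y' : in01 x -> in01 y -> in01 y' -> y <= y' -> T x y <= T x y'.
Proof.
  destruct HT as [_ [Hcomm [_ [Hmono _]]]]. intros.
  rewrite (Hcomm x y), (Hcomm x y') by auto. apply Hmono; auto.
Qed.

Lemma T_le_r x y : in01 x -> in01 y -> T x y <= y.
Proof.
  destruct HT as [_ [Hcomm [_ [Hmono Hunit]]]]. intros Hx Hy.
  assert (H1 : in01 1) by (unfold in01; lra).
  rewrite <- (Hunit y Hy) at 2. rewrite (Hcomm y 1) by auto.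
  apply Hmono; auto. unfold in01 in Hx. lra.
Qed.

Lemma T_le_l x y : in01 x -> in01 y -> T x y <= x.
Proof.
  destruct HT as [_ [Hcomm _]]. intros Hx Hy.
  rewrite Hcomm by auto. apply T_le_r; auto.
Qed.

Lemma Tpow_in01 n a : in01 a -> in01 (Tpow T n a).
Proof.
  intro Ha. induction n as [|n IH]; simpl.
  - unfold in01; lra.
  - apply T_in01; auto.
Qed.

Lemma Tpow_antitone a K n : in01 a -> (K <= n)%nat -> Tpow T n a <= Tpow T K a.
Proof.
  intros Ha Hle. induction Hle as [|n Hle IH].
  - lra.
  - simpl. eapply Rle_trans; [|exact IH]. apply T_le_r; auto using Tpow_in01.
Qed.

End Tnorm.

Fixpoint count_sat {U : Type} (f : U -> bool) (l : list U) : nat :=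
  match l with
  | [] => 0%nat
  | x :: t => ((if f x then 1 else 0) + count_sat f t)%nat
  end.

Lemma count_sat_perm {U : Type} (f : U -> bool) (l l' : list U) :
  Permutation l l' -> count_sat f l = count_sat f l'.
Proof.
  induction 1 as [| x l l' _ IH | x y l | l l' l'' _ IH1 _ IH2]; simpl; try lia.
  all: destruct (f x), (f y); lia.
Qed.

Lemma count_sat_mono {U : Type} (f g : U -> bool) (l : list U) :
  (forall x, In x l -> g x = true -> f x = true) -> (count_sat g l <= count_sat f l)%nat.
Proof.
  induction l as [|h t IH]; intro Hgf; simpl; [lia|].
  assert (IH' := IH (fun x Hx => Hgf x (or_intror Hx))).
  destruct (g h) eqn:Eg.
  - rewrite (Hgf h (or_introl eq_refl) Eg). lia.
  - destruct (f h); lia.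
Qed.

Lemma count_sat_all {U : Type} (f : U -> bool) (l : list U) :
  (forall x, In x l -> f x = true) -> count_sat f l = length l.
Proof.
  induction l as [|h t IH]; intro Hf; simpl; [reflexivity|].
  rewrite (Hf h (or_introl eq_refl)), IH by (intros; apply Hf; right; auto). lia.
Qed.

Lemma count_sat_map {U V : Type} (f : V -> bool) (g : U -> V) (l : list U) :
  count_sat f (map g l) = count_sat (fun x => f (g x)) l.
Proof. induction l as [|h t IH]; simpl; congruence. Qed.

Definition leb_R (x y : R) : bool := if Rle_dec x y then true else false.

Lemma leb_R_spec x y : leb_R x y = true <-> x <= y.
Proof. unfold leb_R. destruct (Rle_dec x y); split; congruence || lra. Qed.

Definition Tprod (T : R -> R -> R) (l : list R) : R := fold_right T 1 l.

Section Tproduct.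
Variable T : R -> R -> R.
Hypothesis HT : is_tnorm T.

Lemma Tprod_in01 l : Forall in01 l -> in01 (Tprod T l).
Proof.
  induction 1; simpl.
  - unfold in01; lra.
  - apply T_in01; auto.
Qed.

Lemma Tprod_le_mem l a : Forall in01 l -> In a l -> Tprod T l <= a.
Proof.
  induction 1 as [|h t Hh Ht IH]; simpl; [tauto|]. intros [->|Hin].
  - apply T_le_l; auto using Tprod_in01.
  - eapply Rle_trans; [apply T_le_r; auto using Tprod_in01|]. auto.
Qed.

Lemma Tprod_le_Tpow l al : Forall in01 l -> in01 al ->
  Tprod T l <= Tpow T (count_sat (fun a => leb_R a al) l) al.
Proof.
  intros Hl Hal. induction Hl as [|h t Hh Ht IH]; simpl; [lra|].
  destruct (leb_R h al) eqn:E; simpl.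
  - apply leb_R_spec in E.
    destruct HT as [_ [_ [_ [Hmono _]]]].
    eapply Rle_trans; [apply (Hmono h al); auto using Tprod_in01|].
    apply T_mono_r; auto using Tprod_in01, Tpow_in01.
  - eapply Rle_trans; [apply T_le_r; auto using Tprod_in01|]. exact IH.
Qed.

Lemma Tprod_few_small l al K : Forall in01 l -> in01 al ->
  Tpow T K al < Tprod T l -> (count_sat (fun a => leb_R a al) l < K)%nat.
Proof.
  intros Hl Hal Hlt.
  destruct (Nat.lt_ge_cases (count_sat (fun a => leb_R a al) l) K) as [Hc|Hge]; [exact Hc|].
  assert (H1 := Tprod_le_Tpow l al Hl Hal).
  assert (H2 := Tpow_antitone T HT al K _ Hal Hge). exfalso. lra.
Qed.

End Tproduct.

Section FuzzyNumber.
Variables (A : R -> R) (m : R).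
Hypothesis HA : fuzzy_number A.
Hypothesis Hm : A m = 1.

(** Since its cuts are intervals, a fuzzy number is quasi-concave. *)
Lemma fuzzy_quasiconcave x y z : x <= z <= y -> Rmin (A x) (A y) <= A z.
Proof.
  destruct HA as [H01 [Hcut _]]. intros Hz.
  destruct (Rle_or_lt (Rmin (A x) (A y)) 0) as [Hle|Hpos].
  - destruct (H01 z). lra.
  - assert (Hmin1 := Rmin_l (A x) (A y)). assert (Hmin2 := Rmin_r (A x) (A y)).
    destruct (H01 x).
    destruct (Hcut (Rmin (A x) (A y))) as [a [b [_ Hab]]]; [lra|].
    apply Hab. apply Hab in Hmin1. apply Hab in Hmin2. lra.
Qed.

(** Points of high membership degree are close to the modal value: by
    quasi-concavity, a point beyond [m +- eps] has degree at most that of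
    [m +- eps], which is below 1 since the mode is unique. *)
Lemma fuzzy_near_mode eps : 0 < eps ->
  exists al, 0 < al < 1 /\ forall y, al < A y -> Rabs (y - m) < eps.
Proof.
  intros Heps. destruct HA as [H01 [_ Huniq]].
  assert (Hnot1 : forall y, y <> m -> A y < 1).
  { intros y Hy. destruct (H01 y) as [_ Hle]. destruct Hle as [Hlt|Heq]; [exact Hlt|].
    exfalso. apply Hy. destruct Huniq as [m0 [_ Hm0]].
    rewrite <- (Hm0 y Heq). apply Hm0. exact Hm. }
  assert (Hl := Hnot1 (m - eps) ltac:(lra)).
  assert (Hr := Hnot1 (m + eps) ltac:(lra)).
  set (al := Rmax (1/2) (Rmax (A (m - eps)) (A (m + eps)))).
  assert (Hal_l : A (m - eps) <= al) by (eapply Rle_trans; [apply Rmax_l|apply Rmax_r]).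
  assert (Hal_r : A (m + eps) <= al) by (eapply Rle_trans; [apply Rmax_r|apply Rmax_r]).
  exists al. split.
  - split; [apply Rlt_le_trans with (1/2); [lra|apply Rmax_l]|].
    apply Rmax_lub_lt; [lra|apply Rmax_lub_lt; assumption].
  - intros y Hy. apply Rabs_def1; apply Rnot_le_lt; intro Hfar.
    + assert (Hq := fuzzy_quasiconcave m y (m + eps) ltac:(lra)).
      rewrite Hm in Hq. destruct (H01 y).
      rewrite Rmin_right in Hq by lra. lra.
    + assert (Hq := fuzzy_quasiconcave y m (m - eps) ltac:(lra)).
      rewrite Hm in Hq. destruct (H01 y).
      rewrite Rmin_left in Hq by lra. lra.
Qed.

Lemma fuzzy_cut_bounded delta : 0 < delta <= 1 ->
  exists C, 0 <= C /\ forall y, delta <= A y -> Rabs (y - m) <= C.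
Proof.
  intros Hd. destruct HA as [_ [Hcut _]].
  destruct (Hcut delta Hd) as [a [b [Hab Hy]]].
  assert (a <= m <= b) by (apply Hy; lra).
  exists (b - a). split; [lra|]. intros y Hdy.
  apply Hy in Hdy. apply Rabs_le. lra.
Qed.

End FuzzyNumber.

Lemma insertR_perm x l : Permutation (x :: l) (insertR x l).
Proof.
  induction l as [|y t IH]; simpl; [auto|].
  destruct (Rle_dec x y); [auto|].
  eapply perm_trans; [apply perm_swap|]. constructor. exact IH.
Qed.

Lemma sortR_perm l : Permutation l (sortR l).
Proof.
  induction l as [|x t IH]; simpl; [auto|].
  eapply perm_trans; [|apply insertR_perm]. constructor. exact IH.
Qed.

Lemma insertR_sorted x l : StronglySorted Rle l -> StronglySorted Rle (insertR x l).
Proof.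
  induction l as [|y t IH]; simpl; intro Hs.
  - repeat constructor.
  - apply StronglySorted_inv in Hs as [Hs Hy].
    destruct (Rle_dec x y) as [Hxy|Hxy].
    + constructor; [constructor; auto|]. constructor; [exact Hxy|].
      rewrite Forall_forall in *. intros z Hz. specialize (Hy z Hz). lra.
    + constructor; [auto|].
      apply (Permutation_Forall (insertR_perm x t)). constructor; auto. lra.
Qed.

Lemma sortR_sorted l : StronglySorted Rle (sortR l).
Proof. induction l; simpl; [constructor|]. apply insertR_sorted; auto. Qed.

Lemma sorted_count_ge s k c : StronglySorted Rle s -> (k < length s)%nat ->
  c <= nth k s 0 -> (length s - k <= count_sat (leb_R c) s)%nat.
Proof.
  revert k. induction s as [|h t IH]; intros k Hs Hk Hc; simpl in *; [lia|].
  apply StronglySorted_inv in Hs as [Hs Hh].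
  destruct k as [|k].
  - rewrite Forall_forall in Hh.
    assert (Hc' : leb_R c h = true) by (apply leb_R_spec; exact Hc).
    rewrite Hc', count_sat_all; [lia|].
    intros x Hx. apply leb_R_spec. specialize (Hh x Hx). lra.
  - assert (length t - k <= count_sat (leb_R c) t)%nat by (apply IH; auto; lia).
    destruct (leb_R c h); lia.
Qed.

Lemma sorted_count_le s k c : StronglySorted Rle s -> (k < length s)%nat ->
  nth k s 0 <= c -> (S k <= count_sat (fun x => leb_R x c) s)%nat.
Proof.
  revert k. induction s as [|h t IH]; intros k Hs Hk Hc; simpl in *; [lia|].
  apply StronglySorted_inv in Hs as [Hs Hh].
  assert (Hhc : h <= c).
  { destruct k as [|k]; [exact Hc|].
    rewrite Forall_forall in Hh.
    assert (In (nth k t 0) t) by (apply nth_In; lia).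
    specialize (Hh _ H). lra. }
  assert (Hhc' : leb_R h c = true) by (apply leb_R_spec; exact Hhc).
  rewrite Hhc'. destruct k as [|k]; [lia|].
  assert (S k <= count_sat (fun x => leb_R x c) t)%nat by (apply IH; auto; lia).
  lia.
Qed.

Definition far (m eps x : R) : bool := leb_R eps (Rabs (x - m)).

(** A median of [2k+1] values, at most [k] of which are [eps]-far from [m],
    is itself [eps]-close to [m]: otherwise [k+1] sorted values would lie on
    the same far side of [m]. *)
Lemma median_near (l : list R) k m eps :
  length l = S (2 * k) -> (count_sat (far m eps) l <= k)%nat ->
  Rabs (median l - m) < eps.
Proof.
  intros Hl Hc. unfold median. rewrite Hl, Nat.div2_succ_double.
  set (s := sortR l).
  assert (Hp : Permutation l s) by apply sortR_perm.
  assert (Hs : StronglySorted Rle s) by apply sortR_sorted.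
  assert (Hls : length s = S (2 * k)) by (rewrite <- (Permutation_length Hp); auto).
  rewrite (count_sat_perm _ _ _ Hp) in Hc.
  apply Rnot_le_lt. intro Hfar.
  destruct (Rle_or_lt 0 (nth k s 0 - m)) as [Hpos|Hneg].
  - rewrite Rabs_right in Hfar by lra.
    assert (H1 := sorted_count_ge s k (m + eps) Hs ltac:(lia) ltac:(lra)).
    assert (H2 : (count_sat (leb_R (m + eps)) s <= count_sat (far m eps) s)%nat).
    { apply count_sat_mono. intros x _ Hx. apply leb_R_spec in Hx.
      unfold far. apply leb_R_spec. pose proof (Rle_abs (x - m)). lra. }
    lia.
  - rewrite Rabs_left in Hfar by lra.
    assert (H1 := sorted_count_le s k (m - eps) Hs ltac:(lia) ltac:(lra)).
    assert (H2 : (count_sat (fun x => leb_R x (m - eps)) s <= count_sat (far m eps) s)%nat).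
    { apply count_sat_mono. intros x _ Hx. apply leb_R_spec in Hx.
      unfold far. apply leb_R_spec. assert (Habs := Rle_abs (- (x - m))). rewrite Rabs_Ropp in Habs. lra. }
    lia.
Qed.

Lemma sum_deviation (l : list R) (f : R -> bool) m C e : 0 <= e ->
  (forall x, In x l -> Rabs (x - m) <= C) ->
  (forall x, In x l -> f x = false -> Rabs (x - m) <= e) ->
  Rabs (fold_right Rplus 0 l - INR (length l) * m)
    <= INR (count_sat f l) * C + INR (length l) * e.
Proof.
  intro He. induction l as [|h t IH]; intros HC He'; cbn [fold_right length count_sat].
  - rewrite Rmult_0_l, Rminus_0_r, Rabs_R0. simpl. lra.
  - assert (IH' := IH (fun x Hx => HC x (or_intror Hx)) (fun x Hx => He' x (or_intror Hx))).
    rewrite S_INR.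
    replace (h + fold_right Rplus 0 t - (INR (length t) + 1) * m)
      with ((h - m) + (fold_right Rplus 0 t - INR (length t) * m)) by ring.
    eapply Rle_trans; [apply Rabs_triang|].
    assert (Hh := HC h (or_introl eq_refl)).
    assert (0 <= INR (length t)) by apply pos_INR.
    destruct (f h) eqn:E.
    + rewrite plus_INR. simpl INR. nra.
    + assert (Hh' := He' h (or_introl eq_refl) E). simpl plus. lra.
Qed.

Definition conv_uniform_levels (P : PossSpace) (Y : nat -> Omega P -> R) (c : R) : Prop :=
  forall eps delta, 0 < eps -> 0 < delta < 1 ->
    exists N, forall n w, (N <= n)%nat -> delta <= pi P w -> Rabs (Y n w - c) < eps.

Section UniformLevels.
Variables (P : PossSpace) (Y : nat -> Omega P -> R) (c : R).
Hypothesis HY : conv_uniform_levels P Y c.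

(** Points of degree above [alpha/2] have [Y n] close to [c], so the
    [alpha]-cuts of [A_{Y_n}] shrink to [c]; they are nonempty because some
    point has degree 1. *)
Lemma uniform_levels_distribution : conv_distribution P Y c.
Proof.
  intros al Hal eps Heps.
  destruct (pi_attains_one P) as [w1 Hw1].
  destruct (HY eps (al / 2) Heps ltac:(lra)) as [N HN].
  exists N. intros n Hn. split.
  - exists (Y n w1). unfold membership.
    assert (pi P w1 <= Poss P (fun w => Y n w = Y n w1)) by (apply Poss_ge; auto). lra.
  - intros s Hs. apply Rnot_lt_le. intro Hgt.
    assert (Poss P (fun w => Y n w = s) <= al / 2).
    { apply Poss_le; [lra|]. intros w Hw. apply Rnot_lt_le. intro Hlt.
      assert (Rabs (Y n w - c) < eps) by (apply HN; auto; lra). subst s. lra. }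
    unfold membership in Hs. lra.
Qed.

(** The event [|Y n - c| >= eps] eventually only contains points of
    degree below any given [delta]. *)
Lemma uniform_levels_measure : conv_measure P Y c.
Proof.
  intros eps Heps e He. set (delta := Rmin (e / 2) (1 / 2)).
  assert (Hd1 : delta <= e / 2) by apply Rmin_l.
  assert (Hd2 : delta <= 1 / 2) by apply Rmin_r.
  assert (Hd0 : 0 < delta) by (apply Rmin_pos; lra).
  destruct (HY eps delta Heps ltac:(lra)) as [N HN].
  exists N. intros n Hn. unfold R_dist. rewrite Rminus_0_r.
  assert (Hp : Poss P (fun w => Rabs (Y n w - c) >= eps) <= delta).
  { apply Poss_le; [lra|]. intros w Hw. apply Rnot_lt_le. intro Hlt.
    assert (Rabs (Y n w - c) < eps) by (apply HN; auto; lra). lra. }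
  pose proof (Poss_nonneg P (fun w => Rabs (Y n w - c) >= eps)).
  rewrite Rabs_right by lra. lra.
Qed.

(** Every point of positive degree lies in some level set, on which [Y n]
    converges; hence divergence only happens at points of degree 0. *)
Lemma uniform_levels_as : conv_as P Y c.
Proof.
  apply Rle_antisym; [|apply Poss_nonneg].
  apply Poss_le; [lra|]. intros w Hdiv. apply Rnot_lt_le. intro Hpos.
  apply Hdiv. intros e He. destruct (pi_range P w).
  destruct (HY e (pi P w / 2) He ltac:(lra)) as [N HN].
  exists N. intros n Hn. unfold R_dist. apply HN; [lia|lra].
Qed.

End UniformLevels.

Section Sample.
Variables (T : R -> R -> R) (A : R -> R) (m : R).
Variables (P : PossSpace) (X : nat -> Omega P -> R).
Hypothesis HT : cont_arch_tnorm T.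
Hypothesis HA : fuzzy_number A.
Hypothesis Hm : A m = 1.
Hypothesis Hind : T_independent P T X.
Hypothesis Hmem : forall i y, membership P (X i) y = A y.

Lemma sample_length n w : length (sample P X n w) = n.
Proof. unfold sample. rewrite length_map, length_seq. reflexivity. Qed.

(** T-independence applied to the singletons [{X_i w}]: the degree of [w]
    is at most the T-product of the membership degrees of its sample. *)
Lemma pi_le_sample_Tprod n w : pi P w <= Tprod T (map A (sample P X n w)).
Proof.
  set (l := map (fun i => (i, fun y => y = X i w)) (seq 0 n)).
  assert (Hnd : NoDup (map fst l)).
  { unfold l. rewrite map_map, map_id. apply seq_NoDup. }
  assert (Hfold : forall L : list nat,
    fold_right (fun p acc => T (Poss P (fun w' => snd p (X (fst p) w'))) acc) 1
      (map (fun i => (i, fun y => y = X i w)) L)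
    = Tprod T (map A (map (fun i => X i w) L))).
  { induction L as [|i L IH]; simpl; [reflexivity|]. rewrite IH. f_equal. apply Hmem. }
  assert (Heq := Hind l Hnd). unfold l in Heq. rewrite Hfold in Heq.
  unfold sample. rewrite <- Heq. apply Poss_ge.
  apply Forall_forall. intros p Hp. apply in_map_iff in Hp as [i [<- _]]. reflexivity.
Qed.

Lemma sample_degrees_in01 n w : Forall in01 (map A (sample P X n w)).
Proof.
  apply Forall_forall. intros a Ha. apply in_map_iff in Ha as [x [<- _]].
  apply (proj1 HA).
Qed.

(** Typical samples: on the level set [{delta <= pi}], every sample value lies
    in the [delta]-cut of [A], and, by the Archimedean property, at most a
    bounded number [K] of sample values are [eps]-far from [m], whatever the
    sample size. *)
Lemma typical_sample eps delta : 0 < eps -> 0 < delta < 1 ->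
  exists K C, 0 <= C /\ forall n w, delta <= pi P w ->
    (forall x, In x (sample P X n w) -> Rabs (x - m) <= C) /\
    (count_sat (far m eps) (sample P X n w) < K)%nat.
Proof.
  intros Heps Hd. destruct HT as [HTn [_ Harch]].
  destruct (fuzzy_near_mode A m HA Hm eps Heps) as [al [Hal Hnear]].
  destruct (fuzzy_cut_bounded A m HA Hm delta ltac:(lra)) as [C [HC Hcut]].
  destruct (Harch al delta Hal Hd) as [K HK].
  exists K, C. split; [exact HC|]. intros n w Hw.
  assert (Hprod := pi_le_sample_Tprod n w).
  split.
  - intros x Hx. apply Hcut.
    assert (Tprod T (map A (sample P X n w)) <= A x)
      by (apply Tprod_le_mem; auto using sample_degrees_in01, in_map).
    lra.
  - assert (Hsmall := Tprod_few_small T HTn _ al K (sample_degrees_in01 n w)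
                        ltac:(unfold in01; lra) ltac:(lra)).
    rewrite count_sat_map in Hsmall.
    eapply Nat.le_lt_trans; [|exact Hsmall]. apply count_sat_mono.
    intros x _ Hfar. apply leb_R_spec. apply Rnot_lt_le. intro Hlt.
    apply Hnear in Hlt. unfold far in Hfar. apply leb_R_spec in Hfar. lra.
Qed.

(** Sample means: the [K] far values shift the sum by at most [K * C], which
    is negligible after division by the sample size. *)
Lemma sample_mean_uniform : conv_uniform_levels P (sample_mean P X) m.
Proof.
  intros eps delta Heps Hd.
  destruct (typical_sample (eps / 2) delta ltac:(lra) Hd) as [K [C [HC Htyp]]].
  destruct (INR_archimed (eps / 2) (INR K * C) ltac:(lra)) as [N HN].
  exists N. intros n w Hn Hw.
  destruct (Htyp (S n) w Hw) as [Hbound Hcount].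
  set (xs := sample P X (S n) w) in *.
  assert (Hdev := sum_deviation xs (far m (eps / 2)) m C (eps / 2) ltac:(lra) Hbound).
  assert (Hclose : forall x, In x xs -> far m (eps / 2) x = false -> Rabs (x - m) <= eps / 2).
  { intros x _ Hx. unfold far, leb_R in Hx.
    destruct (Rle_dec (eps / 2) (Rabs (x - m))); [discriminate|lra]. }
  specialize (Hdev Hclose). unfold xs in Hdev. rewrite sample_length in Hdev. fold xs in Hdev.
  assert (HcK : INR (count_sat (far m (eps / 2)) xs) <= INR K) by (apply le_INR; lia).
  assert (HNn : INR N <= INR (S n)) by (apply le_INR; lia).
  assert (HK0 : 0 <= INR K) by apply pos_INR.
  set (L := INR (S n)) in *.
  assert (HL : 0 < L) by (apply lt_0_INR; lia).
  assert (Hfar : INR (count_sat (far m (eps / 2)) xs) * C < L * (eps / 2))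
    by (apply Rle_lt_trans with (INR K * C); [apply Rmult_le_compat_r|]; nra).
  assert (Hsum : Rabs (fold_right Rplus 0 xs - L * m) < eps * L) by lra.
  unfold sample_mean. fold xs. fold L.
  replace (fold_right Rplus 0 xs / L - m) with ((fold_right Rplus 0 xs - L * m) * / L)
    by (field; lra).
  rewrite Rabs_mult, (Rabs_right (/ L)) by (left; apply Rinv_0_lt_compat; exact HL).
  apply Rmult_lt_reg_r with L; [exact HL|].
  rewrite Rmult_assoc, Rinv_l by lra. lra.
Qed.

(** Sample medians: once [n >= K], fewer than [n] of the [2n+1] values are
    far from [m], so the median is close to [m]. *)
Lemma sample_median_uniform : conv_uniform_levels P (sample_median P X) m.
Proof.
  intros eps delta Heps Hd.
  destruct (typical_sample eps delta Heps Hd) as [K [C [_ Htyp]]].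
  exists K. intros n w Hn Hw.
  destruct (Htyp (S (2 * n)) w Hw) as [_ Hcount].
  apply (median_near _ n); [apply sample_length|lia].
Qed.

End Sample.

Theorem mainTheorem10
  (T : R -> R -> R) (A : R -> R) (m : R)
  (P : PossSpace) (X : nat -> Omega P -> R)
  (HT : cont_arch_tnorm T)
  (HA : fuzzy_number A)
  (Hm : A m = 1)
  (Hind : T_independent P T X)
  (Hmem : forall i y, membership P (X i) y = A y) :
  (conv_distribution P (sample_mean P X) m /\
   conv_measure P (sample_mean P X) m /\
   conv_as P (sample_mean P X) m) /\
  (conv_distribution P (sample_median P X) m /\
   conv_measure P (sample_median P X) m /\
   conv_as P (sample_median P X) m).
Proof.
  assert (Hmean := sample_mean_uniform T A m P X HT HA Hm Hind Hmem).
  assert (Hmedian := sample_median_uniform T A m P X HT HA Hm Hind Hmem).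
  split; repeat split.
  all: first [ apply uniform_levels_distribution
             | apply uniform_levels_measure
             | apply uniform_levels_as ]; assumption.
Qed.
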